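(* For $n\ge1$ let $S_n$ be the set of binary sequences of length $n$ in which no maximal run of zeros has length congruent to $1 \bmod 3$. Classify each $\mathbf v\in S_n$ into one of five types: type A if $\mathbf v$ ends in a maximal run of $m>0$ zeros with $m\equiv 0\pmod 3$; type B if it ends in a maximal run of $m>0$ zeros with $m\equiv 2\pmod 3$; type C if $\mathbf v$ ends in $1$ and either $\mathbf v=1$ or the final $1$ is immediately preceded by a maximal run of $m>0$ zeros with $m\equiv0\pmod 3$; type D if the final $1$ is immediately preceded by a maximal run of $m>0$ zeros with $m\equiv 2\pmod 3$; type E if $\mathbf v$ ends in $11$. Define $f_n:S_n\to\mathcal P(S_{n+1})$ by: if $\mathbf v$ has type A, $f_n(\mathbf v)=\{\mathbf v1\}$; if type B, $f_n(\mathbf v)=\{\mathbf v0,\mathbf v1\}$; if type C or E, writing $\mathbf v=\mathbf u1$, $f_n(\mathbf v)=\{\mathbf v1,\mathbf u00\}$; if type D, $f_n(\mathbf v)=\{\mathbf v1\}$. Then the sets $f_n(\mathbf v)$, $\mathbf v\in S_n$, are pairwise disjoint and $$S_{n+1}=\bigcup_{\mathbf v\in S_n}f_n(\mathbf v),\qquad |S_{n+1}|=\sum_{\mathbf v\in S_n}|f_n(\mathbf v)|.$$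
   Context: A ''run of zeros'' means a maximal block of consecutive zeros; e.g. $00000\in S_5$. $\mathcal P(X)$ denotes the power set of $X$. *)

(* Binary sequences: bool with false = 0, true = 1. *)
From mathcomp Require Import all_boot.
Set Implicit Arguments. Unset Strict Implicit. Unset Printing Implicit Defensive.

(* zruns cur s : lengths (in order) of the maximal runs of zeros of s,
   where cur zeros have already been read just before s. *)
Fixpoint zruns (cur : nat) (s : seq bool) : seq nat :=
  match s with
  | [::] => if 0 < cur then [:: cur] else [::]
  | true :: t => (if 0 < cur then [:: cur] else [::]) ++ zruns 0 t
  | false :: t => zruns cur.+1 t
  end.

Definition zero_runs (s : seq bool) : seq nat := zruns 0 s.

Definition goodseq (s : seq bool) : bool :=
  all (fun m => m %% 3 != 1) (zero_runs s).

Definition Sset (n : nat) : {set n.-tuple bool} := [set t : n.-tuple bool | goodseq t].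

(* length of the trailing (maximal) run of zeros; 0 if s ends in 1 or is empty *)
Definition trailing_zeros (s : seq bool) : nat := find id (rev s).

Definition init (s : seq bool) : seq bool := take (size s).-1 s.

Definition typeA (v : seq bool) : bool :=
  (0 < trailing_zeros v) && (trailing_zeros v %% 3 == 0).
Definition typeB (v : seq bool) : bool :=
  (0 < trailing_zeros v) && (trailing_zeros v %% 3 == 2).
Definition typeC (v : seq bool) : bool :=
  (v == [:: true]) ||
  [&& (0 < size v), last false v,
      0 < trailing_zeros (init v) & trailing_zeros (init v) %% 3 == 0].
Definition typeD (v : seq bool) : bool :=
  [&& (0 < size v), last false v,
      0 < trailing_zeros (init v) & trailing_zeros (init v) %% 3 == 2].
Definition typeE (v : seq bool) : bool :=
  (1 < size v) && (drop (size v - 2) v == [:: true; true]).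

Definition f_seq (v : seq bool) : seq (seq bool) :=
  if typeA v then [:: rcons v true]
  else if typeB v then [:: rcons v false; rcons v true]
  else if typeC v || typeE v then [:: rcons v true; init v ++ [:: false; false]]
  else if typeD v then [:: rcons v true]
  else [::].

Definition f (n : nat) (v : n.-tuple bool) : {set n.+1.-tuple bool} :=
  [set t : n.+1.-tuple bool | val t \in f_seq v].

From mathcomp Require Import all_boot zify.

(* Every word w of S_(n+1) has exactly one parent v in S_n with w in f_n(v):
   drop the last letter of w, unless w ends in a run of zeros of length
   2 mod 3, in which case w = u00 comes from u1.  Membership in S_n only
   depends on the word before its trailing zeros and on the length of the
   trailing run mod 3, so both facts reduce to a case analysis on the last
   two letters; disjointness, the covering and the count then follow. *)

Set Implicit Arguments.
Unset Strict Implicit.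
Unset Printing Implicit Defensive.

Lemma trailing_zeros_rcons_true s : trailing_zeros (rcons s true) = 0.
Proof. by rewrite /trailing_zeros rev_rcons. Qed.

Lemma trailing_zeros_rcons_false s :
  trailing_zeros (rcons s false) = (trailing_zeros s).+1.
Proof. by rewrite /trailing_zeros rev_rcons. Qed.

Lemma init_rcons s x : init (rcons s x) = s.
Proof. by rewrite /init size_rcons -cats1 take_size_cat. Qed.

Definition strip_zeros (s : seq bool) : seq bool :=
  rev (drop (trailing_zeros s) (rev s)).

Lemma strip_zeros_rcons_true s : strip_zeros (rcons s true) = rcons s true.
Proof. by rewrite /strip_zeros trailing_zeros_rcons_true drop0 revK. Qed.

Lemma strip_zeros_rcons_false s : strip_zeros (rcons s false) = strip_zeros s.
Proof. by rewrite /strip_zeros trailing_zeros_rcons_false rev_rcons. Qed.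

Lemma cat_strip_zeros s : strip_zeros s ++ nseq (trailing_zeros s) false = s.
Proof.
elim/last_ind: s => [//|s [] IHs].
  by rewrite strip_zeros_rcons_true trailing_zeros_rcons_true cats0.
rewrite strip_zeros_rcons_false trailing_zeros_rcons_false -addn1 nseqD catA.
by rewrite IHs cats1.
Qed.

Lemma strip_zeros_nil_or_rcons_true s :
  strip_zeros s = [::] \/ exists r, strip_zeros s = rcons r true.
Proof.
elim/last_ind: s => [|s [] IHs]; first by left.
  by right; exists s; rewrite strip_zeros_rcons_true.
by rewrite strip_zeros_rcons_false.
Qed.

Lemma zruns_cat_nseq c k t : zruns c (nseq k false ++ t) = zruns (c + k) t.
Proof. by elim: k c => [|k IHk] c /=; rewrite ?addn0 // IHk addnS. Qed.

Lemma zruns_cat_true c q t : zruns c (q ++ true :: t) = zruns c q ++ zruns 0 t.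
Proof. by elim: q c => [|[] q IHq] c //=; rewrite IHq ?catA. Qed.

Lemma goodseq_rcons_true s : goodseq (rcons s true) = goodseq s.
Proof. by rewrite /goodseq /zero_runs -cats1 zruns_cat_true cats0. Qed.

Lemma goodseq_strip_zeros s :
  goodseq s = goodseq (strip_zeros s) && (trailing_zeros s %% 3 != 1).
Proof.
have zruns_nseq k : zruns 0 (nseq k false) = if k is 0 then [::] else [:: k].
  by rewrite -[nseq k _]cats0 zruns_cat_nseq; case: k.
rewrite -{1}(cat_strip_zeros s) /goodseq /zero_runs.
case: (strip_zeros_nil_or_rcons_true s) => [->|[r ->]].
  by rewrite zruns_nseq; case: (trailing_zeros s) => //= k; rewrite andbT.
rewrite -cats1 -catA zruns_cat_true [zruns 0 (r ++ _)]zruns_cat_true /=.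
rewrite cats0 zruns_nseq all_cat.
by case: (trailing_zeros s) => //= k; rewrite andbT.
Qed.

Lemma typeE_rcons s x :
  typeE (rcons s x) = [&& x, 0 < size s & last false s].
Proof.
case/lastP: s => [|s y]; first by rewrite andbF.
rewrite /typeE !size_rcons last_rcons -!cats1 -catA subn2 /= drop_size_cat //.
by case: x; case: y.
Qed.

Lemma f_seq_rcons_true s :
  f_seq (rcons s true) =
    if trailing_zeros s %% 3 == 0 then
      [:: rcons (rcons s true) true; s ++ [:: false; false]]
    else if trailing_zeros s %% 3 == 2 then [:: rcons (rcons s true) true]
    else [::].
Proof.
have CE : typeC (rcons s true) || typeE (rcons s true) =
           (trailing_zeros s %% 3 == 0).
  rewrite /typeC typeE_rcons size_rcons last_rcons init_rcons /=.
  case/lastP: s => [//|s []].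
    by rewrite trailing_zeros_rcons_true size_rcons last_rcons !orbT.
  rewrite trailing_zeros_rcons_false last_rcons andbF orbF /=.
  have -> // : (rcons (rcons s false) true == [:: true]) = false.
  by apply/eqP => /(congr1 size); rewrite !size_rcons.
rewrite /f_seq /typeA /typeB /typeD trailing_zeros_rcons_true CE.
rewrite size_rcons last_rcons init_rcons /=.
by case: ifP => // _; case: (trailing_zeros s).
Qed.

Lemma f_seq_rcons_false s :
  f_seq (rcons s false) =
    if (trailing_zeros s).+1 %% 3 == 0 then [:: rcons (rcons s false) true]
    else if (trailing_zeros s).+1 %% 3 == 2 then
      [:: rcons (rcons s false) false; rcons (rcons s false) true]
    else [::].
Proof.
have notC : typeC (rcons s false) = false.
  rewrite /typeC last_rcons andbF orbF.
  by apply/eqP => /(congr1 (last false)); rewrite last_rcons.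
rewrite /f_seq /typeA /typeB /typeD notC typeE_rcons trailing_zeros_rcons_false.
by rewrite last_rcons andbF; case: ifP => //; case: ifP.
Qed.

Definition parent (w : seq bool) : seq bool :=
  if last false w || (trailing_zeros w %% 3 == 0) then init w
  else rcons (init (init w)) true.

Lemma parent_rcons_true s : parent (rcons s true) = s.
Proof. by rewrite /parent last_rcons init_rcons. Qed.

Lemma parent_rcons_false s :
  parent (rcons s false) =
    if (trailing_zeros s).+1 %% 3 == 0 then s else rcons (init s) true.
Proof. by rewrite /parent last_rcons trailing_zeros_rcons_false init_rcons. Qed.

Lemma goodseq_rcons_false s :
  goodseq (rcons s false) =
    goodseq (strip_zeros s) && ((trailing_zeros s).+1 %% 3 != 1).
Proof.
rewrite goodseq_strip_zeros strip_zeros_rcons_false.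
by rewrite trailing_zeros_rcons_false.
Qed.

Lemma rcons_true_in_f_seq v :
  goodseq v -> v != [::] -> rcons v true \in f_seq v.
Proof.
case/lastP: v => [//|s []] good_v _.
  move: good_v; rewrite goodseq_rcons_true goodseq_strip_zeros => /andP[_ tz_s].
  rewrite f_seq_rcons_true; case: ifP => [_|not0]; first by rewrite inE eqxx.
  by case: ifP => [_|not2]; [rewrite inE eqxx | lia].
move: good_v; rewrite goodseq_rcons_false => /andP[_ tz_s].
rewrite f_seq_rcons_false; case: ifP => [_|not0]; first by rewrite inE eqxx.
by case: ifP => [_|not2]; [rewrite !inE eqxx orbT | lia].
Qed.

Lemma f_seq_child v w :
  goodseq v -> w \in f_seq v ->
  [/\ goodseq w, size w = (size v).+1 & parent w = v].
Proof.
move=> good_v.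
have child_true : [/\ goodseq (rcons v true), size (rcons v true) = (size v).+1
                    & parent (rcons v true) = v].
  by rewrite goodseq_rcons_true size_rcons parent_rcons_true.
case/lastP: v good_v child_true => [//|s []] good_v child_true.
  rewrite f_seq_rcons_true; case: ifP => [tz_s|_]; last first.
    by case: ifP => _; rewrite ?inE // => /eqP->.
  rewrite !inE => /orP[/eqP-> //|/eqP->].
  move: good_v; rewrite goodseq_rcons_true goodseq_strip_zeros.
  case/andP=> good_s _.
  have -> : s ++ [:: false; false] = rcons (rcons s false) false.
    by rewrite -!cats1 -catA.
  rewrite goodseq_rcons_false strip_zeros_rcons_false.
  rewrite trailing_zeros_rcons_false parent_rcons_false.
  rewrite trailing_zeros_rcons_false init_rcons !size_rcons.
  by rewrite good_s; split=> //; [lia | case: ifP => //; lia].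
move: good_v; rewrite goodseq_rcons_false => /andP[good_s _].
rewrite f_seq_rcons_false; case: ifP => [_|_]; first by rewrite inE => /eqP->.
case: ifP => [tz_s|_]; last by [].
rewrite !inE => /orP[/eqP->|/eqP-> //].
rewrite goodseq_rcons_false strip_zeros_rcons_false trailing_zeros_rcons_false.
rewrite parent_rcons_false trailing_zeros_rcons_false size_rcons.
by rewrite good_s !size_rcons; split=> //; [lia | case: ifP => //; lia].
Qed.

Lemma goodseq_parent w :
  goodseq w -> 1 < size w -> goodseq (parent w) /\ w \in f_seq (parent w).
Proof.
case/lastP: w => [//|v b]; case/lastP: v => [//|s a] good_w _.
case: b good_w => [|] good_w.
  move: good_w; rewrite parent_rcons_true goodseq_rcons_true => good_v.
  by split=> //; apply: rcons_true_in_f_seq; rewrite // -size_eq0 size_rcons.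
case: a good_w => good_w.
  by move: good_w; rewrite goodseq_rcons_false trailing_zeros_rcons_true andbF.
move: good_w; rewrite goodseq_rcons_false strip_zeros_rcons_false.
rewrite trailing_zeros_rcons_false => /andP[good_s tz_w].
rewrite parent_rcons_false trailing_zeros_rcons_false init_rcons.
case: ifP => [tz_w0|tz_w2].
  rewrite goodseq_rcons_false good_s f_seq_rcons_false; split; first by lia.
  by case: ifP => [|_]; [lia | rewrite ifT ?inE ?eqxx //; lia].
have tz_s : trailing_zeros s %% 3 == 0 by lia.
rewrite goodseq_rcons_true goodseq_strip_zeros good_s f_seq_rcons_true tz_s.
split; first by lia.
by rewrite !inE -!cats1 -catA eqxx orbT.
Qed.

Section Fibres.

Variables (T U : finType) (A : {set T}) (B : {set U}).
Variables (F : T -> {set U}) (p : U -> T).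
Hypothesis fibreK : forall t u, t \in A -> u \in F t -> u \in B /\ p u = t.
Hypothesis proj_fibre : forall u, u \in B -> p u \in A /\ u \in F (p u).

Lemma fibres_disjoint t t' :
  t \in A -> t' \in A -> t != t' -> [disjoint F t & F t'].
Proof.
move=> At At' neq_tt'; apply/pred0P => u /=; apply/negP => /andP[Ftu Ft'u].
have [_ pu_t] := fibreK At Ftu; have [_ pu_t'] := fibreK At' Ft'u.
by rewrite -pu_t -pu_t' eqxx in neq_tt'.
Qed.

Lemma bigcup_fibres : B = \bigcup_(t in A) F t.
Proof.
apply/setP => u; apply/idP/bigcupP => [/proj_fibre[]|[t At /(fibreK At)[]//]].
by exists (p u).
Qed.

Lemma card_fibres : #|B| = \sum_(t in A) #|F t|.
Proof.
rewrite -sum1_card (partition_big p (mem A)) => [|u /proj_fibre[]//].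
apply: eq_bigr => t At; rewrite sum1_card; apply: eq_card => u.
rewrite unfold_in /=; apply/andP/idP => [[/proj_fibre[_ Fpu] /eqP <-]//|Ftu].
by have [Bu /eqP] := fibreK At Ftu.
Qed.

End Fibres.

Theorem lemma1 (n : nat) (hn : 1 <= n) :
  (forall v w : n.-tuple bool, v \in Sset n -> w \in Sset n -> v != w ->
     [disjoint f v & f w]) /\
  Sset n.+1 = \bigcup_(v in Sset n) f v /\
  #|Sset n.+1| = \sum_(v in Sset n) #|f v|.
Proof.
pose parent_tuple (w : n.+1.-tuple bool) : n.-tuple bool :=
  insubd [tuple of nseq n true] (parent w).
have val_parent_tuple (w : n.+1.-tuple bool) :
    size (parent w) = n -> val (parent_tuple w) = parent w.
  by move=> size_p; rewrite val_insubd size_p eqxx.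
have fibreK v w :
    v \in Sset n -> w \in f v -> w \in Sset n.+1 /\ parent_tuple w = v.
  rewrite !inE => Sv /(f_seq_child Sv)[Sw _ Ew]; split=> //.
  by apply: val_inj; rewrite val_parent_tuple Ew // size_tuple.
have proj_fibre w :
    w \in Sset n.+1 -> parent_tuple w \in Sset n /\ w \in f (parent_tuple w).
  rewrite inE => Sw.
  have [Sp w_in] : goodseq (parent w) /\ val w \in f_seq (parent w).
    by apply: goodseq_parent; rewrite // size_tuple ltnS.
  have [_ size_w _] := f_seq_child Sp w_in.
  rewrite !inE val_parent_tuple //.
  by apply/eqP; rewrite -eqSS -size_w size_tuple.
split; first exact: fibres_disjoint fibreK.
by split; [exact: bigcup_fibres proj_fibre | exact: card_fibres proj_fibre].
Qed.
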